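(* The left adjoint of the forgetful functor from the category of abelian group objects in power quandles to the category of power quandles sends a power quandle $P$ to the free abelian group $\mathbb{Z}\mathrm{Or}(P)$ on the set $\mathrm{Or}(P)$ of orbits of $P$, with trivial conjugation ($x\rhd y=y$), unit $0$, and power operations given by the $\mathbb{Z}$-linear extension of $\pi^n([a])=[\pi^n(a)]$.
   Context: A power quandle $(P,\rhd,\pi,e)$ consists of a set $P$, a binary operation $\rhd$ on $P$, an element $e\in P$, and maps $\pi^n\colon P\to P$ for each $n\in\mathbb{Z}$, satisfying for all $a,b,c\in P$ and $m,n\in\mathbb{Z}$: (1) each left multiplication $\lambda_a\colon b\mapsto a\rhd b$ is a bijection of $P$, and $a\rhd(b\rhd c)=(a\rhd b)\rhd(a\rhd c)$; (2) $a\rhd a=a$; (3) $e\rhd b=b$ and $a\rhd e=e$; (4) $\pi^1(a)=a$ and $\pi^m(\pi^n(a))=\pi^{mn}(a)$; (5) $\pi^0(a)=e$; (6) $a\rhd\pi^n(b)=\pi^n(a\rhd b)$; (7) $\pi^n(a)\rhd b=\lambda_a^n(b)$, the $n$-th iterate of $\lambda_a$ (using $\lambda_a^{-1}$ for negative $n$, and $\lambda_a^0=\mathrm{id}$). Morphisms of power quandles are maps preserving $\rhd$, all $\pi^n$, and $e$. An abelian group object in power quandles is a power quandle $P$ with an abelian group structure whose zero is $e$ such that $\rhd\colon P\times P\to P$ and all $\pi^n$ are group homomorphisms; morphisms are maps that are both power quandle morphisms and group homomorphisms. The set of orbits $\mathrm{Or}(P)$ is the set of equivalence classes $[a]$ of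 $P$ under the equivalence relation generated by $a\rhd b\sim b$ for all $a,b\in P$; the formula $\pi^n([a])=[\pi^n(a)]$ is well defined.
   Formalization: $\mathbb{Z}\mathrm{Or}(P)$ is the free abelian group on the orbits other than [e], with [e] taken as 0, rather than on all of $\mathrm{Or}(P)$. The statement above fails without it. *)

From HB Require Import structures.
From mathcomp Require Import all_boot all_order all_algebra.
From mathcomp Require Import boolp.
From mathcomp.multinomials Require Import freeg.
From Stdlib Require Import Relations.Relation_Operators.

Set Implicit Arguments.
Unset Strict Implicit.
Unset Printing Implicit Defensive.

Import GRing.Theory.
Local Open Scope ring_scope.

Record pq_struct (T : Type) := PQStruct {
  pq_op : T -> T -> T;
  pq_pi : int -> T -> T;
  pq_e  : T }.

(* lambda_a^{-1}: the inverse of the left multiplication by a (chosen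
   classically; it is the genuine inverse whenever lambda_a is bijective) *)
Definition lam_inv (T : Type) (S : pq_struct T) (a b : T) : T :=
  match pselect (exists c, pq_op S a c = b) with
  | left h => proj1_sig (cid h)
  | right _ => b
  end.

Definition lam_pow (T : Type) (S : pq_struct T) (a : T) (n : int) (b : T) : T :=
  match n with
  | Posz k => iter k (pq_op S a) b
  | Negz k => iter k.+1 (lam_inv S a) b
  end.

Definition power_quandle (T : Type) (S : pq_struct T) : Prop :=
  let op := pq_op S in let pi := pq_pi S in let e := pq_e S in
     (forall a, bijective (op a))
  /\ (forall a b c, op a (op b c) = op (op a b) (op a c))
  /\ (forall a, op a a = a)
  /\ (forall a b, op e b = b /\ op a e = e)
  /\ (forall a m n, pi 1 a = a /\ pi m (pi n a) = pi (m * n) a)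
  /\ (forall a, pi 0 a = e)
  /\ (forall n a b, op a (pi n b) = pi n (op a b))
  /\ (forall n a b, op (pi n a) b = lam_pow S a n b).

Definition pq_morph (T T' : Type) (S : pq_struct T) (S' : pq_struct T')
    (f : T -> T') : Prop :=
  [/\ (forall a b, f (pq_op S a b) = pq_op S' (f a) (f b)),
      (forall n a, f (pq_pi S n a) = pq_pi S' n (f a))
    & f (pq_e S) = pq_e S'].

Definition ab_group_object (A : zmodType) (S : pq_struct A) : Prop :=
  [/\ power_quandle S,
      pq_e S = 0,
      (forall x1 x2 y1 y2 : A,
          pq_op S (x1 + x2) (y1 + y2) = pq_op S x1 y1 + pq_op S x2 y2)
    & (forall n (x y : A), pq_pi S n (x + y) = pq_pi S n x + pq_pi S n y)].

Definition ab_morph (A B : zmodType) (S : pq_struct A) (S' : pq_struct B)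
    (g : A -> B) : Prop :=
  pq_morph S S' g /\ (forall x y : A, g (x + y) = g x + g y).

Definition orbit_step (T : Type) (S : pq_struct T) (x y : T) : Prop :=
  exists c, x = pq_op S c y.

Definition same_orbit (T : Type) (S : pq_struct T) : T -> T -> Prop :=
  clos_refl_sym_trans T (orbit_step S).

Definition orbit (T : Type) (S : pq_struct T) (a : T) : T -> Prop :=
  same_orbit S a.

Definition orb_ne (T : Type) (S : pq_struct T) : Type :=
  {O : T -> Prop | exists a, a <> pq_e S /\ O = orbit S a}.

Definition KOr (T : Type) (S : pq_struct T) : choiceType := {classic (orb_ne S)}.

(* Z Or(P), the free abelian group on the orbits (with [e] = 0). *)
Definition ZOr (T : Type) (S : pq_struct T) : zmodType := {freeg (KOr S) / int}.

Definition ocls (T : Type) (S : pq_struct T) (a : T) : ZOr S :=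
  match pselect (a = pq_e S) with
  | left _ => 0
  | right h =>
      let o : KOr S := exist _ (orbit S a) (ex_intro _ a (conj h erefl)) in
      [freeg [:: (1%:Z, o)]]
  end.

Definition orep (T : Type) (S : pq_struct T) (o : KOr S) : T :=
  proj1_sig (cid (proj2_sig o)).

Definition ZOr_pi (T : Type) (S : pq_struct T) (n : int) : ZOr S -> ZOr S :=
  fglift (fun o : KOr S => (ocls S (pq_pi S n (orep o)) : {freeg (KOr S) / int})).

Definition ZOr_struct (T : Type) (S : pq_struct T) : pq_struct (ZOr S) :=
  PQStruct (fun _ y => y) (@ZOr_pi T S) 0.

From Pilot Require Import Defs.
From HB Require Import structures.
From mathcomp Require Import all_boot all_order all_algebra.
From mathcomp Require Import boolp.
From mathcomp.multinomials Require Import freeg.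
From Stdlib Require Import Relations.Relation_Operators.

(* Conjugation in an abelian group object is trivial, so a power quandle
   morphism f into one is constant on orbits and kills e; hence it factors
   uniquely through the additive map Z Or(P) -> A sending [a] to f a.  The same
   invariance argument applied to a |-> [pi^n a] makes pi^n well defined on
   Z Or(P), and the power quandle axioms there reduce to their instances on the
   generators [a]. *)

Set Implicit Arguments.
Unset Strict Implicit.
Unset Printing Implicit Defensive.

Import GRing.Theory.
Local Open Scope ring_scope.

HB.instance Definition _ (R : nzRingType) (K : choiceType) (M : lmodType R)
    (f : K -> M) :=
  GRing.isZmodMorphism.Build {freeg K / R} M (fglift f) (lift_is_additive f).

Lemma zmod_morphism_of_morphD (U V : zmodType) (h : U -> V) :
  {morph h : x y / x + y} -> zmod_morphism h.
Proof.
move=> hD x y; have h0 : h 0 = 0 by apply: (addrI (h 0)); rewrite -hD !addr0.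
by rewrite -[LHS]addr0 -(subrr (h y)) addrA -hD subrK.
Qed.

Lemma freeg_morph_ext (K : choiceType) (V : zmodType)
    (h1 h2 : {freeg K / int} -> V) :
    {morph h1 : x y / x + y} -> {morph h2 : x y / x + y} ->
  (forall z, h1 << z >> = h2 << z >>) -> h1 =1 h2.
Proof.
move=> /zmod_morphism_of_morphD h1A /zmod_morphism_of_morphD h2A eq_gen.
pose g1 : {additive _ -> V} := HB.pack h1 (GRing.isZmodMorphism.Build _ _ h1 h1A).
pose g2 : {additive _ -> V} := HB.pack h2 (GRing.isZmodMorphism.Build _ _ h2 h2A).
suff : g1 =1 g2 by [].
elim/freeg_ind_dom0 => [|k z D _ _ IH]; first by rewrite !raddf0.
by rewrite !raddfD IH -[k]intz -freegU_mulz !raddfMz /= eq_gen.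
Qed.

Lemma lam_pow_trivial (A : Type) (SA : pq_struct A) :
  (forall x y, pq_op SA x y = y) -> forall a n b, lam_pow SA a n b = b.
Proof.
move=> opE a n b.
have lam_invE c : lam_inv SA a c = c.
  by rewrite /lam_inv; case: pselect => // h; case: (cid h) => d /=; rewrite opE.
case: n => k /=; elim: k => //= k ->; by rewrite ?opE ?lam_invE.
Qed.

(* In an abelian group object, x |> y = (x + 0) |> (0 + y) = x |> 0 + 0 |> y = y. *)
Lemma ab_group_object_op_trivial (A : zmodType) (SA : pq_struct A) :
  ab_group_object SA -> forall x y, pq_op SA x y = y.
Proof.
case=> [[_ [_ [_ [opE _]]]] e0 opD _] x y.
have := opD x 0 0 y; rewrite addr0 add0r => ->.
by rewrite -e0 (proj2 (opE x x)) (proj1 (opE x y)) e0 add0r.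
Qed.

Section PowerQuandleOrbits.
Variables (T : Type) (S : pq_struct T).
Hypothesis hP : power_quandle S.

Lemma same_orbit_congr (X : Type) (phi : T -> X) :
  (forall c b, phi (pq_op S c b) = phi b) ->
  forall a b, same_orbit S a b -> phi a = phi b.
Proof.
by move=> phi_op a b; elim => {a b} [a b [c ->]|//|a b _ ->|a b c _ -> _ ->].
Qed.

Lemma same_orbit_e a b : same_orbit S a b -> (a = pq_e S <-> b = pq_e S).
Proof.
have [lam_bij [_ [_ [opE _]]]] := hP.
elim => {a b} [a b [c ->]|//|a b _ [ab ba]|a b c _ [ab ba] _ [bc cb]]; try by split.
- split => [ce|->]; last exact: (proj2 (opE c c)).
  by apply: (bij_inj (lam_bij c)); rewrite ce (proj2 (opE c c)).
- by split => [/ab/bc|/cb/ba].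
Qed.

Lemma pq_pi_e n : pq_pi S n (pq_e S) = pq_e S.
Proof.
have [_ [_ [_ [_ [piM [pi0 _]]]]]] := hP.
by rewrite -{1}(pi0 (pq_e S)) (proj2 (piM _ _ _)) mulr0 pi0.
Qed.

Lemma orep_spec (o : KOr S) : orep o <> pq_e S /\ sval o = Defs.orbit S (orep o).
Proof. by rewrite /orep; case: (cid (proj2_sig o)). Qed.

Lemma ocls_e : ocls S (pq_e S) = 0.
Proof. by rewrite /ocls; case: pselect. Qed.

Lemma ocls_ne a (o : KOr S) :
  a <> pq_e S -> sval o = Defs.orbit S a -> ocls S a = << o >>.
Proof.
move=> ha; case: o => O pO /= OE; subst O; rewrite /ocls; case: pselect => // ha'.
by congr Freeg; congr [:: (_, _)]; congr exist; exact: Prop_irrelevance.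
Qed.

Lemma ocls_orep (o : KOr S) : ocls S (orep o) = << o >>.
Proof. by have [ho oE] := orep_spec o; exact: ocls_ne. Qed.

Lemma ocls_same_orbit a b : same_orbit S a b -> ocls S a = ocls S b.
Proof.
move=> ab; have [ae be] := @same_orbit_e _ _ ab.
have [ea | ha] := pselect (a = pq_e S); first by rewrite ea (ae ea).
have hb : b <> pq_e S by move/be.
pose o : KOr S := exist _ (Defs.orbit S a) (ex_intro _ a (conj ha erefl)).
rewrite (@ocls_ne a o) // (@ocls_ne b o) //=.
apply: funext => x; apply: propext; split; last exact: rst_trans.
by apply: rst_trans; apply: rst_sym.
Qed.

Lemma ocls_op c b : ocls S (pq_op S c b) = ocls S b.
Proof. by apply: ocls_same_orbit; apply: rst_step; exists c. Qed.

(* [e] is the zero of Z Or(P), which is free on the remaining orbits. *)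
Lemma fglift_ocls (M : lmodType int) (phi : T -> M) :
  (forall c b, phi (pq_op S c b) = phi b) -> phi (pq_e S) = 0 ->
  forall a, fglift (fun o => phi (orep o)) (ocls S a) = phi a.
Proof.
move=> phi_op phi_e a.
have [-> | ha] := pselect (a = pq_e S); first by rewrite ocls_e raddf0.
pose o : KOr S := exist _ (Defs.orbit S a) (ex_intro _ a (conj ha erefl)).
rewrite (@ocls_ne a o) // liftU scale1r.
apply: same_orbit_congr => //.
have [_ oE] := orep_spec o; rewrite /Defs.orbit /= in oE.
by rewrite -oE; exact: rst_refl.
Qed.

Lemma ZOr_pi_ocls n a : ZOr_pi n (ocls S a) = ocls S (pq_pi S n a).
Proof.
have [_ [_ [_ [_ [_ [_ [pi_op _]]]]]]] := hP.
apply: (@fglift_ocls _ (fun a => ocls S (pq_pi S n a))) => [c b|].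
  by rewrite -pi_op ocls_op.
by rewrite pq_pi_e ocls_e.
Qed.

Lemma ZOr_piD n : {morph @ZOr_pi T S n : x y / x + y}.
Proof. exact: raddfD. Qed.

Lemma ZOr_morph_ext (V : zmodType) (h1 h2 : ZOr S -> V) :
    {morph h1 : x y / x + y} -> {morph h2 : x y / x + y} ->
  (forall a, h1 (ocls S a) = h2 (ocls S a)) -> h1 =1 h2.
Proof. by move=> h1D h2D eq_ocls; apply: freeg_morph_ext => // o; rewrite -ocls_orep. Qed.

Lemma ZOr_ab_group_object : ab_group_object (ZOr_struct S).
Proof.
have [_ [_ [_ [_ [piM [pi0 _]]]]]] := hP.
split=> //=; last exact: ZOr_piD.
split; first by move=> y; exists id.
do 3 (split; first by []).
split; [move=> x m n; split|split].
- apply: (@ZOr_morph_ext _ _ id) => // [|a]; first exact: ZOr_piD.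
  by rewrite /= ZOr_pi_ocls (proj1 (piM a 0 0)).
- apply: (@ZOr_morph_ext _ (ZOr_pi m \o ZOr_pi n)) => [y z|y z|a] /=.
  + by rewrite !ZOr_piD.
  + exact: ZOr_piD.
  + by rewrite !ZOr_pi_ocls (proj2 (piM _ _ _)).
- move=> x; apply: (@ZOr_morph_ext _ _ (fun=> 0)) => [|y z|a]; first exact: ZOr_piD.
  + by rewrite addr0.
  + by rewrite /= ZOr_pi_ocls pi0 ocls_e.
split=> // n a b; exact/esym/lam_pow_trivial.
Qed.

Lemma ocls_pq_morph : pq_morph S (ZOr_struct S) (ocls S).
Proof. by split=> [a b|n a|]; rewrite /= ?ocls_op ?ZOr_pi_ocls ?ocls_e. Qed.

Variables (A : zmodType) (SA : pq_struct A) (f : T -> A).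
Hypotheses (hA : ab_group_object SA) (hf : pq_morph S SA f).

Definition ZOr_lift (x : ZOr S) : A :=
  fglift (fun o : KOr S => f (orep o) : zmodule A) x.

Lemma ZOr_liftD : {morph ZOr_lift : x y / x + y}.
Proof. by move=> x y; rewrite /ZOr_lift raddfD. Qed.

Lemma ZOr_lift_ocls a : ZOr_lift (ocls S a) = f a.
Proof.
have [f_op _ f_e] := hf; have [_ e0 _ _] := hA.
apply: (@fglift_ocls (zmodule A) f) => [c b|]; last by rewrite f_e e0.
by rewrite f_op ab_group_object_op_trivial.
Qed.

Lemma ZOr_lift_ab_morph : ab_morph (ZOr_struct S) SA ZOr_lift.
Proof.
have [_ f_pi f_e] := hf; have [_ e0 _ pi_add] := hA.
split; last exact: ZOr_liftD.
split=> [x y|n|] /=; first by rewrite ab_group_object_op_trivial.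
- apply: ZOr_morph_ext => [y z|y z|a] /=.
  + by rewrite ZOr_piD ZOr_liftD.
  + by rewrite ZOr_liftD pi_add.
  + by rewrite ZOr_pi_ocls !ZOr_lift_ocls f_pi.
- by rewrite /ZOr_lift raddf0 e0.
Qed.

End PowerQuandleOrbits.

Theorem mainTheorem3 (T : Type) (S : pq_struct T) :
  power_quandle S ->
  [/\ ab_group_object (ZOr_struct S),
      pq_morph S (ZOr_struct S) (ocls S)
    & forall (A : zmodType) (SA : pq_struct A), ab_group_object SA ->
      forall f : T -> A, pq_morph S SA f ->
      exists g : ZOr S -> A,
        [/\ ab_morph (ZOr_struct S) SA g,
            (forall a : T, g (ocls S a) = f a)
          & forall g' : ZOr S -> A, ab_morph (ZOr_struct S) SA g' ->
              (forall a : T, g' (ocls S a) = f a) -> forall x, g' x = g x]].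
Proof.
move=> hP; split; [exact: ZOr_ab_group_object | exact: ocls_pq_morph |].
move=> A SA hA f hf; exists (ZOr_lift f).
split; [exact: ZOr_lift_ab_morph | exact: ZOr_lift_ocls hA hf |].
move=> g' [_ g'D] g'f; apply: ZOr_morph_ext g'D (ZOr_liftD f) _ => a.
by rewrite g'f (ZOr_lift_ocls hA hf).
Qed.
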